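(* The subspace topology induced on $D(G,K)\subseteq\mathcal R(G,K)$ by the nice topology of $\mathcal R(G,K)$ coincides with the canonical Fréchet topology of $D(G,K)$ (defined by the norms $\|\cdot\|_\rho$, $p^{-1}<\rho<1$).
   Context: $p$ is an odd prime and $K$ is a complete discretely valued field with $\mathbb Q_p\subseteq K\subseteq\mathbb C_p$, $o_K$ its ring of integers. $G$ is a uniform pro-$p$ group of dimension $d$ with an ordered minimal system of topological generators $h_1,\dots,h_d$; $b_i=h_i-1$. For $\alpha\in\mathbb Z^d$ write $\mathbf b^\alpha=b_1^{\alpha_1}\cdots b_d^{\alpha_d}$ and $\deg\alpha=\alpha_1+\dots+\alpha_d$. $D(G,K)$ is the ring of series $\sum_{\alpha\in\mathbb N_0^d}d_\alpha\mathbf b^\alpha$ with $\{|d_\alpha|\rho^{\deg\alpha}\}$ bounded for all $0<\rho<1$; for $\rho\in p^{\mathbb Q}\cap(p^{-1},1)$, $\|\cdot\|_\rho=\sup_\alpha|d_\alpha|\rho^{\deg\alpha}$ and $D_\rho(G,K)$ is the completion. For $r_0\le r$ in $p^{\mathbb Q}\cap(p^{-1},1)$, $D_{[r_0,r]}(G,K)$ is the $K$-Banach algebra obtained from $A=D_r(G,K)$ by generalized microlocalization at the multiplicative monoid $S$ generated by $b_1,\dots,b_d$ with respect to the two norms $\|\cdot\|_{r_0},\|\cdot\|_r$: with $S_i=\{a:|at-s|_i<|s|_i\text{ for some }s,t\in S\}$, $\Delta_i((s,a),(t,b))=|s|_i^{-1}|t|_i^{-1}|at-sb|_i$, $d_i(x,y)=\inf_{\xi\in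 S_i\times A}\max(\Delta_i(x,\xi),\Delta_i(y,\xi))$, $d=\max(d_1,d_2)$, it is the Hausdorff completion of $(S\times A,d)$ with its natural Banach algebra structure in which $(s,a)$ becomes $s^{-1}a$ and $S$ becomes invertible; $D(G,K)\subseteq D_r(G,K)\subseteq D_{[r_0,r]}(G,K)$. Its elements are exactly the convergent Laurent series $\sum_{\alpha\in\mathbb Z^d}d_\alpha\mathbf b^\alpha$ with $|d_\alpha|r_0^{\deg\alpha},|d_\alpha|r^{\deg\alpha}\to0$ as $\sum_i|\alpha_i|\to\infty$. $D_{[r,1)}(G,K)=\varprojlim_{r''\to1}D_{[r,r'']}(G,K)$ and $\mathcal R(G,K)=\varinjlim_{r\to1}D_{[r,1)}(G,K)$. Nice topology: for $x_0=\sum_\alpha c_{0,\alpha}\mathbf b^\alpha\in\mathcal R(G,K)$ let $L_{x_0}=\{\sum_\alpha d_\alpha\mathbf b^\alpha\in\mathcal R(G,K):|c_{0,-\alpha}||d_\alpha|\le1\ \forall\alpha\in\mathbb Z^d\}$; the nice topology is the locally convex topology on $\mathcal R(G,K)$ in which an $o_K$-lattice is open iff it contains some $L_{x_0}$. *)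

From HB Require Import structures.
From mathcomp Require Import all_boot all_order all_algebra.
From Stdlib Require Import Reals.
Set Implicit Arguments. Unset Strict Implicit. Unset Printing Implicit Defensive.
Import GRing.Theory.
Local Open Scope ring_scope.

Definition rpow_int (r : R) (n : int) : R :=
  match n with Posz k => pow r k | Negz k => Rinv (pow r (S k)) end.

Definition in_pQ (p : nat) (r : R) : Prop :=
  exists (a : Z) (b : nat), leq 1 b /\ pow r b = powerRZ (INR p) a.

Definition good_radius (p : nat) (r : R) : Prop :=
  in_pQ p r /\ Rlt (Rinv (INR p)) r /\ Rlt r R1.

(* K is a complete discretely valued field with Q_p ⊆ K ⊆ C_p, via its
   absolute value abs extending the p-adic one. *)
Record padic_field (p : nat) (K : fieldType) (abs : K -> R) : Prop := {
  pf_abs0 : forall x, abs x = R0 <-> x = 0;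
  pf_absM : forall x y, abs (x * y) = Rmult (abs x) (abs y);
  pf_ultra : forall x y, Rle (abs (x + y)) (Rmax (abs x) (abs y));
  pf_abs_p : abs (p%:R) = Rinv (INR p);
  pf_discrete : exists e : nat, leq 1 e /\
      forall x, x <> 0 -> exists k : Z, pow (abs x) e = powerRZ (INR p) k;
  pf_complete : forall u : nat -> K,
      (forall eps, Rlt R0 eps -> exists N, forall m n, leq N m -> leq N n ->
          Rlt (abs (u m - u n)) eps) ->
      exists l, forall eps, Rlt R0 eps -> exists N, forall n, leq N n ->
          Rlt (abs (u n - l)) eps;
  (* residue field algebraic over F_p (this, with the above, encodes K ⊆ C_p) *)
  pf_residue_alg : forall x, Rle (abs x) R1 ->
      exists f : {poly int}, f \is monic /\
        Rlt (abs (map_poly (fun z : int => z%:~R : K) f).[x]) R1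
}.

Definition Zd (d : nat) := {ffun 'I_d -> int}.
Definition degZ d (a : Zd d) : int := \sum_(i < d) a i.
Definition norm1 d (a : Zd d) : nat := \sum_(i < d) absz (a i).
Definition nonneg d (a : Zd d) : bool := [forall i, 0 <= a i].
Definition negZd d (a : Zd d) : Zd d := [ffun i => - a i].

(* Coefficient families: the element sum_alpha c_alpha b^alpha. *)
Definition coefs (K : Type) (d : nat) := Zd d -> K.

Definition cadd (K : fieldType) d (x y : coefs K d) : coefs K d := fun a => x a + y a.
Definition csub (K : fieldType) d (x y : coefs K d) : coefs K d := fun a => x a - y a.
Definition cscale (K : fieldType) d (c : K) (x : coefs K d) : coefs K d := fun a => c * x a.
Definition czero (K : fieldType) d : coefs K d := fun _ => 0.

Definition tends0 d (f : Zd d -> R) : Prop :=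
  forall eps, Rlt R0 eps -> exists N : nat, forall a, ltn N (norm1 a) -> Rlt (f a) eps.

(* D(G,K): power series in b_1..b_d with |d_alpha| rho^deg bounded for all 0<rho<1
   (coefficients indexed by Z^d, vanishing off N^d, so that D ⊆ R literally). *)
Definition in_D (K : fieldType) (abs : K -> R) d (x : coefs K d) : Prop :=
  (forall a, ~~ nonneg a -> x a = 0) /\
  forall rho, Rlt R0 rho -> Rlt rho R1 ->
    exists M, forall a, Rle (Rmult (abs (x a)) (rpow_int rho (degZ a))) M.

(* R(G,K) = colim_{r->1} lim_{r''->1} D_[r,r''](G,K): Laurent series. *)
Definition in_Robba p (K : fieldType) (abs : K -> R) d (x : coefs K d) : Prop :=
  exists r, good_radius p r /\
    forall r'', good_radius p r'' -> Rle r r'' ->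
      tends0 (fun a => Rmult (abs (x a)) (rpow_int r (degZ a))) /\
      tends0 (fun a => Rmult (abs (x a)) (rpow_int r'' (degZ a))).

Definition Lx0 p (K : fieldType) (abs : K -> R) d (x0 : coefs K d) (x : coefs K d)
  : Prop :=
  in_Robba p abs x /\ forall a, Rle (Rmult (abs (x0 (negZd a))) (abs (x a))) R1.

Definition is_lattice p (K : fieldType) (abs : K -> R) d (L : coefs K d -> Prop)
  : Prop :=
  (forall x, L x -> in_Robba p abs x) /\
  L (@czero K d) /\
  (forall x y, L x -> L y -> L (cadd x y)) /\
  (forall c x, Rle (abs c) R1 -> L x -> L (cscale c x)) /\
  (forall x, in_Robba p abs x -> exists c, c <> 0 /\ L (cscale c x)).

Definition nice_open_lattice p (K : fieldType) (abs : K -> R) d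
  (L : coefs K d -> Prop) : Prop :=
  is_lattice p abs L /\
  exists x0, in_Robba p abs x0 /\ forall x, Lx0 p abs x0 x -> L x.

Definition nice_open p (K : fieldType) (abs : K -> R) d (V : coefs K d -> Prop)
  : Prop :=
  (forall x, V x -> in_Robba p abs x) /\
  forall v, V v -> exists L, nice_open_lattice p abs L /\
     forall y, in_Robba p abs y -> L (csub y v) -> V y.

Definition D_subspace_open p (K : fieldType) (abs : K -> R) d
  (W : coefs K d -> Prop) : Prop :=
  exists V, nice_open p abs V /\ forall x, in_D abs x -> (W x <-> V x).

Definition rho_ball (K : fieldType) (abs : K -> R) d (rho eps : R) (x : coefs K d)
  : Prop :=
  forall a, Rle (Rmult (abs (x a)) (rpow_int rho (degZ a))) eps.

Definition frechet_open p (K : fieldType) (abs : K -> R) d (W : coefs K d -> Prop)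
  : Prop :=
  forall x, W x -> exists (rs : list R) (eps : R), Rlt R0 eps /\
    (forall rho, List.In rho rs -> good_radius p rho) /\
    forall y, in_D abs y ->
      (forall rho, List.In rho rs -> rho_ball abs rho eps (csub y x)) -> W y.

(* A nice neighbourhood [x + L_x0] of [x] contains the [||.||_r]-ball of radius
   [1/M] around [x] in [D(G,K)], where [r] is a radius of convergence of [x0]
   and [M] bounds [|c_(0,-a)| r^(-deg a)]: so subspace-open sets are Fréchet
   open.  Conversely, given finitely many radii [rho < 1] and [eps], choose [m]
   with [rho^m <= 1/p] and [j] with [p^(-j) <= eps], and let
   [x0 = sum_(a >= 0) p^(-j) p^(|a|/m) b^(-a)].  Then [|c_(0,-a)| = p^(j - |a|/m)]
   decays, but only like [r^(2|a|)] for [r^(2m) = 1/p], so [x0] lies in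
   [R(G,K)]; and [|c_(0,-a)| |d_a| <= 1] forces [|d_a| rho^|a| <= p^(-j)].
   Hence [(x + L_x0) ∩ D(G,K)] lies in the given finite intersection of balls,
   and every Fréchet-open set is the trace of a union of such translates. *)

From Pilot Require Import Defs.
From mathcomp Require Import all_boot all_order all_algebra.
From Stdlib Require Import Reals Lra Psatz FunctionalExtensionality.
(* Re-imported so that [nonneg] is the multi-index predicate, not Stdlib's
   [nonnegreal] projection. *)
Import Pilot.Defs.
Set Implicit Arguments. Unset Strict Implicit. Unset Printing Implicit Defensive.
Import GRing.Theory.
Local Open Scope ring_scope.

Section MultiIndices.
Variable d : nat.
Implicit Types (a : Zd d) (f g h : Zd d -> R).

Lemma norm1_negZd a : norm1 (negZd a) = norm1 a.
Proof. by apply: eq_bigr => i _; rewrite ffunE abszN. Qed.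

Lemma negZdK a : negZd (negZd a) = a.
Proof. by apply/ffunP => i; rewrite !ffunE opprK. Qed.

Lemma degZ_negZd a : degZ (negZd a) = - degZ a.
Proof. by rewrite /degZ -sumrN; apply: eq_bigr => i _; rewrite ffunE. Qed.

Lemma degZ_nonneg a : nonneg a -> degZ a = Posz (norm1 a).
Proof.
move/forallP=> a_ge0; rewrite /norm1 -natz natr_sum; apply: eq_bigr => i _.
by rewrite natz gez0_abs.
Qed.

Lemma finType_bounded (T : finType) (F : T -> R) : exists M, forall t, Rle (F t) M.
Proof.
suff [M leFM] : exists M, forall t, t \in enum T -> Rle (F t) M.
  by exists M => t; apply: leFM; rewrite mem_enum.
elim: (enum T) => [|t s [M leFM]]; first by exists R0.
exists (Rmax (F t) M) => u; rewrite in_cons => /orP[/eqP->|/leFM leFuM].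
  exact: Rmax_l.
exact: Rle_trans leFuM (Rmax_r _ _).
Qed.

(* There are finitely many [a] with [norm1 a <= N]: each is encoded by the
   absolute values and signs of its entries. *)
Lemma bounded_norm1_le f (N : nat) :
  exists M, forall a, (norm1 a <= N)%nat -> Rle (f a) M.
Proof.
pose T := {ffun 'I_d -> ('I_N.+1 * bool)%type}.
pose decode (t : T) : Zd d :=
  [ffun i => if (t i).2 then - Posz (t i).1 else Posz (t i).1].
have [M leM] := finType_bounded (fun t => f (decode t)).
exists M => a le_a_N.
pose t : T := [ffun i => match a i with
  | Posz k => (inord k, false) | Negz k => (inord k.+1, true) end].
suff -> : a = decode t by apply: leM.
apply/ffunP => i; rewrite !ffunE.
have : (absz (a i) <= N)%nat.
  by apply: leq_trans le_a_N; rewrite /norm1 (bigD1 i) //= leq_addr.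
by case: (a i) => k /= le_k_N; rewrite inordK // NegzE.
Qed.

Lemma tends0_bounded f : tends0 f -> exists M, forall a, Rle (f a) M.
Proof.
move=> f0; have [N ltf1] := f0 R1 Rlt_0_1.
have [M leM] := bounded_norm1_le f N.
exists (Rmax R1 M) => a; case: (leqP (norm1 a) N) => [/leM le_fa_M|/ltf1 lt_fa_1].
  exact: Rle_trans le_fa_M (Rmax_r _ _).
exact: Rle_trans (Rlt_le _ _ lt_fa_1) (Rmax_l _ _).
Qed.

Lemma tends0_le_max f g h : tends0 f -> tends0 g ->
  (forall a, Rle (h a) (Rmax (f a) (g a))) -> tends0 h.
Proof.
move=> f0 g0 le_h eps eps_gt0.
have [Nf ltf] := f0 eps eps_gt0; have [Ng ltg] := g0 eps eps_gt0.
exists (maxn Nf Ng) => a /=; rewrite gtn_max => /andP[ltNf ltNg].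
exact: Rle_lt_trans (le_h a) (Rmax_lub_lt _ _ _ (ltf a ltNf) (ltg a ltNg)).
Qed.

Lemma pow_le1 s n : Rle 0 s -> Rle s 1 -> Rle (s ^ n) 1.
Proof.
move=> s_ge0 s_le1; elim: n => [|n IHn] /=; first lra.
have := pow_le s n s_ge0; nra.
Qed.

Lemma pow_le1_decr s (m n : nat) : Rle 0 s -> Rle s 1 -> (m <= n)%nat ->
  Rle (s ^ n) (s ^ m).
Proof.
move=> s_ge0 s_le1 le_mn; rewrite -(subnKC le_mn) -plusE pow_add.
have := pow_le1 (n - m) s_ge0 s_le1; have := pow_le s m s_ge0; nra.
Qed.

Lemma pow_lt1_small s eps : Rle 0 s -> Rlt s 1 -> Rlt 0 eps ->
  exists N, forall n, (N <= n)%nat -> Rlt (s ^ n) eps.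
Proof.
move=> s_ge0 s_lt1 eps_gt0.
have [N ltN] := pow_lt_1_zero s ltac:(rewrite Rabs_pos_eq; lra) eps eps_gt0.
exists N => n /leP le_Nn; have := ltN n le_Nn.
by rewrite Rabs_pos_eq //; apply: pow_le.
Qed.

Lemma tends0_geometric f (C s : R) : Rle 0 s -> Rlt s 1 ->
  (forall a, Rle (f a) (C * s ^ norm1 a)) -> tends0 f.
Proof.
move=> s_ge0 s_lt1 le_f eps eps_gt0.
have C'_gt0 : Rlt 0 (Rmax 1 C) by have := Rmax_l 1 C; lra.
have [N ltN] := pow_lt1_small s_ge0 s_lt1 (Rdiv_lt_0_compat _ _ eps_gt0 C'_gt0).
exists N => a /ltnW /ltN lt_sn; apply: Rle_lt_trans (le_f a) _.
have sn_ge0 := pow_le s (norm1 a) s_ge0.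
have : Rle (C * s ^ norm1 a) (Rmax 1 C * s ^ norm1 a).
  by apply: Rmult_le_compat_r => //; apply: Rmax_r.
have : Rlt (Rmax 1 C * s ^ norm1 a) eps.
  by move: lt_sn; rewrite /Rdiv Rmult_comm => /(Rmult_lt_compat_l _ _ _ C'_gt0);
     rewrite -Rmult_assoc Rinv_r ?Rmult_1_l //; lra.
lra.
Qed.

End MultiIndices.

Lemma rpow_int_gt0 r z : Rlt 0 r -> Rlt 0 (rpow_int r z).
Proof.
by move=> r_gt0; case: z => n; [|apply: Rinv_0_lt_compat]; apply: pow_lt.
Qed.

Lemma rpow_int_oppn r n : rpow_int r (- Posz n) = Rinv (r ^ n).
Proof. by case: n => [|n]; [rewrite oppr0 /= Rinv_1 | rewrite -NegzE]. Qed.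

Lemma rpow_int_oppKr r z : Rlt 0 r -> (rpow_int r (- z) * rpow_int r z = 1)%R.
Proof.
move=> r_gt0; case: z => n.
  by rewrite rpow_int_oppn Rinv_l //; have := pow_lt r n r_gt0; lra.
by rewrite NegzE opprK /= Rinv_r //; have := pow_lt r n.+1 r_gt0; rewrite /=; lra.
Qed.

Lemma INR_prime_ge2 p : prime p -> Rle 2 (INR p).
Proof. by move/prime_gt1/leP => lt1p; apply: (le_INR 2). Qed.

Lemma invp_gt0 p : prime p -> Rlt 0 (/ INR p).
Proof. by move/INR_prime_ge2 => p_ge2; apply: Rinv_0_lt_compat; lra. Qed.

Lemma invp_lt1 p : prime p -> Rlt (/ INR p) 1.
Proof.
by move/INR_prime_ge2 => p_ge2; rewrite -Rinv_1; apply: Rinv_lt_contravar; lra.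
Qed.

Lemma good_radius_bounds p r : prime p -> good_radius p r -> Rlt 0 r /\ Rlt r 1.
Proof.
by move=> p_prime [_ [lt_invp_r lt_r1]]; have := invp_gt0 p_prime; split=> //; lra.
Qed.

Section PadicAbsoluteValue.
Variables (p : nat) (K : fieldType) (abs : K -> R).
Hypotheses (p_prime : prime p) (hK : padic_field p abs).

Lemma abs0 : abs 0 = 0%R.
Proof. exact/(pf_abs0 hK). Qed.

Lemma abs1 : abs 1 = 1%R.
Proof.
have abs1_neq0 : abs 1 <> 0%R by move/(pf_abs0 hK)/eqP; rewrite oner_eq0.
have := pf_absM hK 1 1; rewrite mulr1 => abs11.
by apply: (Rmult_eq_reg_l (abs 1)) => //; rewrite Rmult_1_r -abs11.
Qed.

(* [abs (-1) = -1] is the other square root of [abs 1]; it is excluded since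
   then [abs (-p)] would be both [<= -1] (ultrametric) and [= -1/p]. *)
Lemma absN1 : abs (-1) = 1%R.
Proof.
have sq : Rmult (abs (-1)) (abs (-1)) = 1%R by rewrite -(pf_absM hK) mulrNN mulr1 abs1.
have [//|absN1_neg] : abs (-1) = 1%R \/ abs (-1) = (-1)%R by nra.
have le_n1 k : Rle (abs (- (k.+1)%:R)) (-1).
  elim: k => [|k IHk]; first by rewrite absN1_neg; lra.
  rewrite -addn1 natrD opprD addrC.
  apply: Rle_trans (pf_ultra hK _ _) _.
  by apply: Rmax_lub => //; rewrite absN1_neg; lra.
have := le_n1 p.-1; rewrite prednK ?prime_gt0 //.
rewrite -mulN1r (pf_absM hK) absN1_neg (pf_abs_p hK).
have := invp_lt1 p_prime; lra.
Qed.

Lemma absN x : abs (- x) = abs x.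
Proof. by rewrite -mulN1r (pf_absM hK) absN1 Rmult_1_l. Qed.

Lemma abs_ge0 x : Rle 0 (abs x).
Proof.
have := pf_ultra hK x (- x); rewrite subrr abs0 absN Rmax_left //; lra.
Qed.

Lemma absX x n : abs (x ^+ n) = (abs x ^ n)%R.
Proof. by elim: n => [|n IHn]; rewrite ?expr0 ?abs1 // exprS (pf_absM hK) IHn. Qed.

Lemma absV x : x <> 0 -> abs (x^-1) = (/ abs x)%R.
Proof.
move=> x_neq0; have absx_neq0 : abs x <> 0%R by move/(pf_abs0 hK).
apply: (Rmult_eq_reg_l (abs x)) => //.
by rewrite -(pf_absM hK) mulfV ?abs1 ?Rinv_r //; apply/eqP.
Qed.

End PadicAbsoluteValue.

Lemma good_radius_root p n : prime p -> (2 <= n)%nat ->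
  exists r, good_radius p r /\ (r ^ n = / INR p)%R.
Proof.
move=> p_prime le2n; have p_ge2 := INR_prime_ge2 p_prime.
have n_gt0 : Rlt 0 (INR n) by apply: lt_0_INR; apply/ltP; exact: leq_trans _ le2n.
pose r := Rpower (INR p) (- / INR n).
have r_gt0 : Rlt 0 r by apply: exp_pos.
have rn : (r ^ n = / INR p)%R.
  rewrite -Rpower_pow // /r Rpower_mult.
  have -> : (- / INR n * INR n = - 1)%R by field; lra.
  by rewrite Rpower_Ropp Rpower_1 //; lra.
have r_lt1 : Rlt r 1.
  apply: Rnot_le_lt => /(pow_R1_Rle _ n); rewrite rn; have := invp_lt1 p_prime; lra.
exists r; split=> //; split; last split=> //.
  exists (-1)%Z, n; split; first exact: leq_trans _ le2n.
  by rewrite rn /= Rmult_1_r.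
rewrite -rn.
apply: Rle_lt_trans (pow_le1_decr (Rlt_le _ _ r_gt0) (Rlt_le _ _ r_lt1) le2n) _.
by rewrite /=; nra.
Qed.

Section Robba.
Variables (p : nat) (K : fieldType) (abs : K -> R) (d : nat).
Hypotheses (p_prime : prime p) (hK : padic_field p abs).
Implicit Types (x y z : coefs K d) (a : Zd d).

Let abs_ge0 := abs_ge0 p_prime hK.

Lemma Robba_dominated x y z :
  (forall a, Rle (abs (z a)) (Rmax (abs (x a)) (abs (y a)))) ->
  in_Robba p abs x -> in_Robba p abs y -> in_Robba p abs z.
Proof.
move=> le_z [rx [rx_good x_lim]] [ry [ry_good y_lim]].
have tends0_z t : Rlt 0 t ->
    tends0 (fun a => abs (x a) * rpow_int t (degZ a))%R ->
    tends0 (fun a => abs (y a) * rpow_int t (degZ a))%R ->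
    tends0 (fun a => abs (z a) * rpow_int t (degZ a))%R.
  move=> t_gt0 xt0 yt0; apply: tends0_le_max xt0 yt0 _ => a.
  have t_a := Rlt_le _ _ (rpow_int_gt0 (degZ a) t_gt0).
  rewrite ![(_ * rpow_int t _)%R]Rmult_comm RmaxRmult //.
  exact: Rmult_le_compat_l.
pose r := Rmax rx ry.
have r_good : good_radius p r by apply: Rmax_case.
exists r; split=> // t t_good le_rt.
have le_rx_t := Rle_trans _ _ _ (Rmax_l rx ry) le_rt.
have le_ry_t := Rle_trans _ _ _ (Rmax_r rx ry) le_rt.
split; apply: tends0_z.
- exact: (good_radius_bounds p_prime r_good).1.
- exact: (x_lim r r_good (Rmax_l _ _)).2.
- exact: (y_lim r r_good (Rmax_r _ _)).2.
- exact: (good_radius_bounds p_prime t_good).1.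
- exact: (x_lim t t_good le_rx_t).2.
- exact: (y_lim t t_good le_ry_t).2.
Qed.

Lemma D_tends0 y r : in_D abs y -> Rlt 0 r -> Rlt r 1 ->
  tends0 (fun a => abs (y a) * rpow_int r (degZ a))%R.
Proof.
move=> [y_supp y_bnd] r_gt0 r_lt1.
pose s := sqrt r.
have s_gt0 : Rlt 0 s by apply: sqrt_lt_R0.
have ss : (s * s = r)%R by apply: sqrt_sqrt; lra.
have s_lt1 : Rlt s 1 by nra.
have [M leM] := y_bnd s s_gt0 s_lt1.
apply: (@tends0_geometric _ _ (Rmax 0 M) s (Rlt_le _ _ s_gt0) s_lt1) => a.
have sn_ge0 := pow_le s (norm1 a) (Rlt_le _ _ s_gt0).
have C_ge0 := Rmax_l 0 M.
case a_ge0: (nonneg a); last first.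
  by rewrite y_supp ?a_ge0 // (abs0 hK) Rmult_0_l; apply: Rmult_le_pos.
have := leM a; rewrite (degZ_nonneg a_ge0) /= -ss Rpow_mult_distr -Rmult_assoc => le_M.
by apply: Rmult_le_compat_r => //; apply: Rle_trans le_M (Rmax_r _ _).
Qed.

Lemma D_Robba y : in_D abs y -> in_Robba p abs y.
Proof.
move=> yD; have [r [r_good _]] := good_radius_root p_prime (leqnn 2).
exists r; split=> // t t_good _.
have [r_gt0 r_lt1] := good_radius_bounds p_prime r_good.
have [t_gt0 t_lt1] := good_radius_bounds p_prime t_good.
by split; apply: D_tends0.
Qed.

Lemma Robba_czero : in_Robba p abs (@czero K d).
Proof.
apply: D_Robba; split=> // rho _ _; exists 0%R => a.
by rewrite /czero (abs0 hK) Rmult_0_l; apply: Rle_refl.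
Qed.

Lemma Robba_csub y x : in_Robba p abs y -> in_Robba p abs x ->
  in_Robba p abs (csub y x).
Proof.
move=> yR xR; apply: Robba_dominated yR xR => a.
by rewrite /csub -(absN p_prime hK (x a)); exact: (pf_ultra hK).
Qed.

Lemma Robba_cscale c x : Rle (abs c) 1 -> in_Robba p abs x ->
  in_Robba p abs (cscale c x).
Proof.
move=> c_le1 xR; apply: (Robba_dominated _ xR xR) => a.
rewrite Rmax_left /cscale ?(pf_absM hK); last exact: Rle_refl.
by have := abs_ge0 (x a); have := abs_ge0 c; nra.
Qed.

Lemma Robba_coef_product_bounded x0 x :
  in_Robba p abs x0 -> in_Robba p abs x ->
  exists B, forall a, Rle (abs (x0 (negZd a)) * abs (x a)) B.
Proof.
move=> [r0 [r0_good x0_lim]] [rx [rx_good x_lim]].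
pose r := Rmax r0 rx.
have r_good : good_radius p r by apply: Rmax_case.
have [r_gt0 _] := good_radius_bounds p_prime r_good.
have [M0 leM0] := tends0_bounded (x0_lim r r_good (Rmax_l _ _)).2.
have [Mx leMx] := tends0_bounded (x_lim r r_good (Rmax_r _ _)).2.
exists (M0 * Mx)%R => a.
have := leM0 (negZd a); have := leMx a; rewrite degZ_negZd.
have uv := rpow_int_oppKr (degZ a) r_gt0.
have u_gt0 := rpow_int_gt0 (- degZ a) r_gt0; have v_gt0 := rpow_int_gt0 (degZ a) r_gt0.
set u := rpow_int r (- degZ a) in uv u_gt0 *.
set v := rpow_int r (degZ a) in uv v_gt0 *.
move=> le_x_Mx le_x0_M0.
have -> : (abs (x0 (negZd a)) * abs (x a) =
           (abs (x0 (negZd a)) * u) * (abs (x a) * v))%R.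
  by rewrite -[LHS]Rmult_1_r -uv; ring.
by apply: Rmult_le_compat => //; apply: Rmult_le_pos => //; lra.
Qed.

Lemma Lx0_absorbs x0 x : in_Robba p abs x0 -> in_Robba p abs x ->
  exists c, c <> 0 /\ Lx0 p abs x0 (cscale c x).
Proof.
move=> x0R xR; have [B leB] := Robba_coef_product_bounded x0R xR.
have B'_gt0 : Rlt 0 (Rmax 1 B) by have := Rmax_l 1 B; lra.
have q_gt0 := invp_gt0 p_prime.
have [k ltk] := pow_lt1_small (Rlt_le _ _ q_gt0) (invp_lt1 p_prime)
  (Rinv_0_lt_compat _ B'_gt0).
have {}ltk := ltk k (leqnn k).
have abs_c : abs ((p%:R : K) ^+ k) = ((/ INR p) ^ k)%R.
  by rewrite (absX hK) (pf_abs_p hK).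
exists ((p%:R : K) ^+ k); split.
  by move=> c0; have := pow_lt _ k q_gt0; rewrite -abs_c c0 (abs0 hK); lra.
split.
  apply: Robba_cscale xR; rewrite abs_c.
  by apply: pow_le1; apply: Rlt_le => //; apply: invp_lt1.
move=> a; rewrite /cscale (pf_absM hK) abs_c.
have : Rle ((/ INR p) ^ k * Rmax 1 B) 1.
  by have := Rinv_l _ (Rgt_not_eq _ _ B'_gt0); nra.
have := leB a; have := Rmax_r 1 B; have := pow_lt _ k q_gt0.
have := abs_ge0 (x a); have := abs_ge0 (x0 (negZd a)); nra.
Qed.

Lemma Lx0_lattice x0 : in_Robba p abs x0 -> is_lattice p abs (Lx0 p abs x0).
Proof.
move=> x0R; split; first by move=> x [].
split.
  split; first exact: Robba_czero.
  by move=> a; rewrite /czero (abs0 hK) Rmult_0_r; lra.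
split.
  move=> x y [xR x_le1] [yR y_le1]; split.
    by apply: Robba_dominated xR yR => a; exact: (pf_ultra hK).
  move=> a; apply: Rle_trans (_ : Rle _ (abs (x0 (negZd a)) *
      Rmax (abs (x a)) (abs (y a)))) _.
    by apply: Rmult_le_compat_l (abs_ge0 _) (pf_ultra hK _ _).
  by rewrite -RmaxRmult ?abs_ge0 //; apply: Rmax_lub.
split.
  move=> c x c_le1 [xR x_le1]; split; first exact: Robba_cscale.
  move=> a; rewrite /cscale (pf_absM hK).
  by have := x_le1 a; have := abs_ge0 (x a); have := abs_ge0 (x0 (negZd a));
     have := abs_ge0 c; nra.
by move=> x; apply: Lx0_absorbs.
Qed.

Lemma csub_D_supported y x : in_D abs y -> in_D abs x ->
  forall a, ~~ nonneg a -> csub y x a = 0.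
Proof.
by move=> [y_supp _] [x_supp _] a a_neg; rewrite /csub y_supp // x_supp // subrr.
Qed.

Lemma rho_ball_sub_Lx0 x0 : in_Robba p abs x0 ->
  exists r eps, good_radius p r /\ Rlt 0 eps /\
    forall z, (forall a, ~~ nonneg a -> z a = 0) -> rho_ball abs r eps z ->
      forall a, Rle (abs (x0 (negZd a)) * abs (z a)) 1.
Proof.
move=> [r [r_good x0_lim]].
have [r_gt0 _] := good_radius_bounds p_prime r_good.
have [M leM] := tends0_bounded (x0_lim r r_good (Rle_refl r)).2.
have M'_gt0 : Rlt 0 (Rmax 1 M) by have := Rmax_l 1 M; lra.
exists r, (/ Rmax 1 M)%R; split=> //; split; first exact: Rinv_0_lt_compat.
move=> z z_supp z_ball a.
case a_ge0: (nonneg a); last by rewrite z_supp ?a_ge0 // (abs0 hK) Rmult_0_r; lra.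
have := z_ball a; have := leM (negZd a).
rewrite degZ_negZd (degZ_nonneg a_ge0) rpow_int_oppn /=.
have rn_gt0 := pow_lt r (norm1 a) r_gt0.
set u := (r ^ norm1 a)%R in rn_gt0 *.
move=> le_x0_M le_z_eps.
have -> : (abs (x0 (negZd a)) * abs (z a) =
           (abs (x0 (negZd a)) * / u) * (abs (z a) * u))%R.
  by rewrite -[LHS]Rmult_1_r -(Rinv_l u); [ring | lra].
rewrite -(Rinv_r (Rmax 1 M)); last lra.
apply: Rmult_le_compat => //; try apply: Rmult_le_pos; try exact: abs_ge0.
- by apply: Rlt_le; apply: Rinv_0_lt_compat.
- by lra.
- exact: Rle_trans le_x0_M (Rmax_r _ _).
Qed.

Definition padic_weight (m j : nat) : coefs K d := fun b =>
  if nonneg (negZd b) then (p%:R^-1) ^+ j * p%:R ^+ (norm1 b %/ m) else 0.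

Lemma abs_padic_weight m j a : nonneg a ->
  abs (padic_weight m j (negZd a)) = (INR p ^ j * (/ INR p) ^ (norm1 a %/ m))%R.
Proof.
have p_neq0 : (p%:R : K) <> 0 by move=> p0; have := invp_gt0 p_prime;
  rewrite -(pf_abs_p hK) p0 (abs0 hK); lra.
move=> a_ge0; rewrite /padic_weight negZdK a_ge0 norm1_negZd (pf_absM hK) !(absX hK).
by rewrite (absV hK) // (pf_abs_p hK) Rinv_inv.
Qed.

(* For [r^(2m) = 1/p] we have [|p|^(n/m) <= p r^(2n)]. *)
Lemma padic_weight_Robba m j : (0 < m)%nat -> in_Robba p abs (padic_weight m j).
Proof.
move=> m_gt0; have p_ge2 := INR_prime_ge2 p_prime.
have [r [r_good r2m]] := good_radius_root p_prime (n := m.*2)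
  ltac:(by rewrite -addnn (leq_add m_gt0 m_gt0)).
have [r_gt0 r_lt1] := good_radius_bounds p_prime r_good.
suff le_geom t : Rle r t ->
    forall b, Rle (abs (padic_weight m j b) * rpow_int t (degZ b))
                  (INR p ^ j * INR p * r ^ norm1 b).
  exists r; split=> // t _ le_rt.
  by split; apply: tends0_geometric (Rlt_le _ _ r_gt0) r_lt1 _; apply: le_geom;
     [apply: Rle_refl|].
move=> le_rt b.
have rn_gt0 := pow_lt r (norm1 b) r_gt0.
have pj_gt0 := pow_lt (INR p) j ltac:(lra).
case b_neg: (nonneg (negZd b)); last first.
  rewrite /padic_weight b_neg (abs0 hK) Rmult_0_l.
  by apply: Rmult_le_pos; [apply: Rmult_le_pos|]; lra.
rewrite -[b]negZdK abs_padic_weight // degZ_negZd (degZ_nonneg b_neg) rpow_int_oppn.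
rewrite !norm1_negZd; set n := norm1 b in rn_gt0 *; set Q := (n %/ m)%nat.
have le_tr : Rle (/ t ^ n) (/ r ^ n).
  by apply: Rinv_le_contravar => //; apply: pow_incr; lra.
have le_qQ : Rle ((/ INR p) ^ Q) (INR p * (r ^ n * r ^ n)).
  have lt_n : (n + n <= m.*2 * Q.+1)%nat.
    have := ltn_ceil n m_gt0; rewrite -/Q => /ltnW le_n.
    by rewrite -addnn mulnDl mulnC leq_add.
  rewrite -pow_add -[((/ INR p) ^ Q)%R]Rmult_1_l -(Rinv_r (INR p)); last lra.
  rewrite Rmult_assoc tech_pow_Rmult; apply: Rmult_le_compat_l; first lra.
  by rewrite -r2m -pow_mult; apply: pow_le1_decr; [lra | lra | exact: lt_n].
have invp_Q := pow_le (/ INR p) Q (Rlt_le _ _ (invp_gt0 p_prime)).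
have tn_inv_ge0 := Rlt_le _ _ (Rinv_0_lt_compat _ (pow_lt t n ltac:(lra))).
apply: (Rle_trans _ (INR p ^ j * (INR p * (r ^ n * r ^ n)) * / r ^ n)).
  rewrite Rmult_assoc [X in Rle _ X]Rmult_assoc.
  apply: Rmult_le_compat_l; first lra.
  by apply: Rmult_le_compat.
by right; field; lra.
Qed.

Lemma Lx0_padic_weight_sub_rho_ball m j rho z :
  (0 < m)%nat -> Rle 0 rho -> Rle rho 1 -> Rle (rho ^ m) (/ INR p) ->
  (forall a, ~~ nonneg a -> z a = 0) ->
  (forall a, Rle (abs (padic_weight m j (negZd a)) * abs (z a)) 1) ->
  rho_ball abs rho ((/ INR p) ^ j) z.
Proof.
move=> m_gt0 rho_ge0 rho_le1 rho_m z_supp z_le1 a.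
have qj_ge0 := pow_le (/ INR p) j (Rlt_le _ _ (invp_gt0 p_prime)).
case a_ge0: (nonneg a); last by rewrite z_supp ?a_ge0 // (abs0 hK) Rmult_0_l.
rewrite (degZ_nonneg a_ge0) /=.
have := z_le1 a; rewrite abs_padic_weight //.
set n := norm1 a; set Q := (n %/ m)%nat => le1.
have le_rho : Rle (rho ^ n) ((/ INR p) ^ Q).
  apply: (Rle_trans _ ((rho ^ m) ^ Q)).
    by rewrite -pow_mult; apply: pow_le1_decr => //; rewrite multE mulnC leq_divM.
  by apply: pow_incr; split=> //; apply: pow_le.
have pq : (INR p ^ j * (/ INR p) ^ j = 1)%R.
  by rewrite -Rpow_mult_distr Rinv_r ?pow1 //; have := INR_prime_ge2 p_prime; lra.
apply: Rle_trans (Rmult_le_compat_l _ _ _ (abs_ge0 _) le_rho) _.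
have -> : (abs (z a) * (/ INR p) ^ Q =
           (/ INR p) ^ j * (INR p ^ j * (/ INR p) ^ Q * abs (z a)))%R.
  by rewrite -[LHS]Rmult_1_l -pq; ring.
by rewrite -[X in Rle _ X]Rmult_1_r; apply: Rmult_le_compat_l.
Qed.

Lemma radii_pow_le (q : R) (rs : list R) : Rlt 0 q ->
  (forall rho, List.In rho rs -> Rle 0 rho /\ Rlt rho 1) ->
  exists m, (0 < m)%nat /\ forall rho, List.In rho rs -> Rle (rho ^ m) q.
Proof.
move=> q_gt0; elim: rs => [|r rs IHrs] rs_bnd; first by exists 1%nat.
have [r_ge0 r_lt1] := rs_bnd r (or_introl erefl).
have [m1 [m1_gt0 le_m1]] := IHrs (fun rho rho_rs => rs_bnd rho (or_intror rho_rs)).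
have [m2 lt_m2] := pow_lt1_small r_ge0 r_lt1 q_gt0.
exists (m1 * m2.+1)%nat; split; first by rewrite muln_gt0 m1_gt0.
move=> rho [<-|rho_rs].
  apply: Rle_trans (Rlt_le _ _ (lt_m2 m2.+1 (leqnSn m2))).
  by apply: pow_le1_decr; [| apply: Rlt_le | apply: leq_pmull].
have [rho_ge0 rho_lt1] := rs_bnd rho (or_intror rho_rs).
apply: Rle_trans (le_m1 rho rho_rs).
by apply: pow_le1_decr; [| apply: Rlt_le | apply: leq_pmulr].
Qed.

Lemma Lx0_sub_rho_balls rs eps : Rlt 0 eps ->
  (forall rho, List.In rho rs -> good_radius p rho) ->
  exists x0, in_Robba p abs x0 /\
    forall z, (forall a, ~~ nonneg a -> z a = 0) ->
      (forall a, Rle (abs (x0 (negZd a)) * abs (z a)) 1) ->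
      forall rho, List.In rho rs -> rho_ball abs rho eps z.
Proof.
move=> eps_gt0 rs_good.
have rs_bnd rho : List.In rho rs -> Rle 0 rho /\ Rlt rho 1.
  by move=> /rs_good /(good_radius_bounds p_prime) []; split=> //; apply: Rlt_le.
have [m [m_gt0 le_m]] := radii_pow_le (invp_gt0 p_prime) rs_bnd.
have [j lt_j] :=
  pow_lt1_small (Rlt_le _ _ (invp_gt0 p_prime)) (invp_lt1 p_prime) eps_gt0.
exists (padic_weight m j); split; first exact: padic_weight_Robba.
move=> z z_supp z_le1 rho rho_rs a.
have [rho_ge0 rho_lt1] := rs_bnd rho rho_rs.
apply: Rle_trans (Rlt_le _ _ (lt_j j (leqnn j))).
exact: (Lx0_padic_weight_sub_rho_ball m_gt0 rho_ge0 (Rlt_le _ _ rho_lt1)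
  (le_m rho rho_rs) z_supp z_le1).
Qed.

Lemma D_subspace_open_frechet W : (forall x, W x -> in_D abs x) ->
  D_subspace_open p abs W -> frechet_open p abs W.
Proof.
move=> W_D [V [[_ V_open] WV]] x Wx.
have xD := W_D x Wx.
have [L [[_ [x0 [x0R Lx0_L]]] L_V]] := V_open x ((WV x xD).1 Wx).
have [r [eps [r_good [eps_gt0 ball_Lx0]]]] := rho_ball_sub_Lx0 x0R.
exists [:: r], eps; split=> //; split; first by move=> rho [<-|[]].
move=> y yD y_ball; apply/(WV y yD).2/L_V; first exact: D_Robba.
apply: Lx0_L; split; first by apply: Robba_csub; apply: D_Robba.
by apply: ball_Lx0; [exact: csub_D_supported | exact: y_ball (or_introl erefl)].
Qed.

(* [V] is the union of the translates [w + L_x0] that meet [D(G,K)] only in [W]. *)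
Lemma frechet_D_subspace_open W : (forall x, W x -> in_D abs x) ->
  frechet_open p abs W -> D_subspace_open p abs W.
Proof.
move=> W_D W_open.
pose P w x0 := forall y, in_D abs y -> Lx0 p abs x0 (csub y w) -> W y.
pose V y := in_Robba p abs y /\
  exists w x0, in_Robba p abs x0 /\ P w x0 /\ Lx0 p abs x0 (csub y w).
exists V; split.
  split; first by move=> y [].
  move=> v [vR [w [x0 [x0R [Pw vw]]]]].
  have [_ [_ [L_add _]]] := Lx0_lattice x0R.
  exists (Lx0 p abs x0); split; first by split; [exact: Lx0_lattice | exists x0].
  move=> y yR yv; split=> //; exists w, x0; do 2 split=> //.
  have -> : csub y w = cadd (csub y v) (csub v w).
    by apply: functional_extensionality => a; rewrite /cadd /csub addrA subrK.
  exact: L_add.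
move=> x xD; split=> [Wx|[_ [w [x0 [_ [Pw xw]]]]]]; last exact: Pw.
have [rs [eps [eps_gt0 [rs_good rs_W]]]] := W_open x Wx.
have [x0 [x0R Lx0_balls]] := Lx0_sub_rho_balls eps_gt0 rs_good.
split; first exact: D_Robba.
exists x, x0; do 2 split=> //.
  move=> y yD [_ yx_le1]; apply: rs_W => // rho rho_rs.
  exact: Lx0_balls (csub_D_supported yD xD) yx_le1 rho rho_rs.
have -> : csub x x = @czero K d.
  by apply: functional_extensionality => a; rewrite /csub /czero subrr.
by have [_ []] := Lx0_lattice x0R.
Qed.

End Robba.

Theorem lemma5p10 (p : nat) (hp : prime p) (hodd : odd p)
  (K : fieldType) (abs : K -> R) (hK : padic_field p abs) (d : nat)
  (W : coefs K d -> Prop) (hW : forall x, W x -> in_D abs x) :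
  D_subspace_open p abs W <-> frechet_open p abs W.
Proof.
split; [exact: D_subspace_open_frechet | exact: frechet_D_subspace_open].
Qed.
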